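(* (i) Let $(p,q)$ satisfy $\frac2p+\frac1q=1$, $1\le q<\infty$, and let $\beta>\frac{2q}{q+1}$. Then there is no constant $C$ such that for all $N\ge1$, all $\lambda\in\ell^\beta$ and all orthonormal systems $(f_j)$ in $L^2(\mathbf T)$ one has $\|\sum_j\lambda_j|\mathscr D_Nf_j|^2\|_{L^p_tL^q_x(\mathbf T\times\mathbf T)}\le CN^{1/p}\|\lambda\|_{\ell^\beta}$. (ii) Let $\beta>2$. Then there is no constant $C$ such that for all $N\ge1$, all $\lambda\in\ell^\beta$ and all orthonormal systems $(f_j)$ in $L^2(\mathbf T)$ one has $\|\sum_j\lambda_j|\mathscr D_Nf_j|^2\|_{L^2_tL^\infty_x(\mathbf T\times\mathbf T)}\le CN^{1/2}\|\lambda\|_{\ell^\beta}$.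
   Context: $\mathbf T=[0,2\pi)$, $S_N=\mathbb Z\cap[-N,N]$, $\mathscr F_xf(k)=\frac1{2\pi}\int_{\mathbf T}e^{-ixk}f(x)\,dx$, and $\mathscr D_Nf(t,x)=\frac1{2\pi}\sum_{n\in S_N}\mathscr F_xf(n)e^{i(xn+t\sqrt{n^2+n^4})}$. *)

From HB Require Import structures.
From mathcomp Require Import all_boot all_order all_algebra.
From mathcomp Require Import all_classical all_reals all_analysis.
From mathcomp Require Export complex.
Import Order.TTheory GRing.Theory Num.Theory.
Import numFieldNormedType.Exports.

Set Implicit Arguments.
Unset Strict Implicit.
Unset Printing Implicit Defensive.

Local Open Scope classical_set_scope.
Local Open Scope ring_scope.
Local Open Scope complex_scope.

Section Defs.
Variable R : realType.

Definition Tset : set R := `[0%R, 2 * pi[.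

Lemma measurable_Tset : measurable Tset.
Proof. exact: measurable_itv. Qed.

Definition muT : {measure set _ -> \bar R} :=
  mrestr (@lebesgue_measure R) measurable_Tset.

Definition cabs (z : R[i]) : R := ComplexField.Normc.normc z.

Definition cexpi (th : R) : R[i] := (cos th) +i* (sin th).

Definition cint (g : R -> R[i]) : R[i] :=
  (\int[@lebesgue_measure R]_(x in Tset) complex.Re (g x)) +i*
  (\int[@lebesgue_measure R]_(x in Tset) complex.Im (g x)).

Definition L2T (f : R -> R[i]) : Prop :=
  [/\ measurable_fun Tset (fun x => complex.Re (f x)),
      measurable_fun Tset (fun x => complex.Im (f x)) &
      (\int[@lebesgue_measure R]_(x in Tset) ((cabs (f x)) ^+ 2)%:E < +oo)%E].

Definition l2_inner (f g : R -> R[i]) : R[i] := cint (fun x => f x * (g x)^*).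

Definition orthonormal_system (f : nat -> R -> R[i]) : Prop :=
  (forall j, L2T (f j)) /\
  (forall j k, l2_inner (f j) (f k) = (j == k)%:R).

Definition fourier (f : R -> R[i]) (n : int) : R[i] :=
  ((2 * pi)^-1)%:C * cint (fun x => cexpi (- (x * n%:~R)) * f x).

Definition omega (n : int) : R := Num.sqrt (n%:~R ^+ 2 + n%:~R ^+ 4).

(* D_N f (t, x) = 1/(2 pi) sum_{|n| <= N} F f(n) e^{i(xn + t omega n)};
   the index k < 2N+1 encodes n = k - N in S_N = Z \cap [-N, N]. *)
Definition DN (N : nat) (f : R -> R[i]) (t x : R) : R[i] :=
  ((2 * pi)^-1)%:C *
  \sum_(k < (2 * N).+1)
     (fourier f (k%:Z - N%:Z) *
      cexpi (x * (k%:Z - N%:Z)%:~R + t * omega (k%:Z - N%:Z))).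

Definition csum (u : nat -> R[i]) : R[i] :=
  (limn (series (fun j => complex.Re (u j)))) +i*
  (limn (series (fun j => complex.Im (u j)))).

Definition density (N : nat) (lam : nat -> R[i]) (f : nat -> R -> R[i])
    (t x : R) : R[i] :=
  csum (fun j => lam j * ((cabs (DN N (f j) t x)) ^+ 2)%:C).

(* sum_j |lambda_j|^beta (in [0, +oo]); lambda in l^beta iff it is finite *)
Definition lpow_sum (beta : R) (lam : nat -> R[i]) : \bar R :=
  (\sum_(j <oo) ((cabs (lam j)) `^ beta)%:E)%E.

Definition lnorm (beta : R) (lam : nat -> R[i]) : \bar R :=
  ((lpow_sum beta lam) `^ beta^-1)%E.

Definition mixed_norm (p q : \bar R) (F : R -> R -> R) : \bar R :=
  Lnorm muT p (fun t => Lnorm muT q (fun x => (F t x)%:E)).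

Definition recip (p : \bar R) : R :=
  match p with
  | r%:E => r^-1
  | _ => 0
  end.

End Defs.

From HB Require Import structures.
From mathcomp Require Import all_boot all_order all_algebra.
From mathcomp Require Import all_classical all_reals all_analysis.
From mathcomp Require Import complex.
From mathcomp Require Import ring lra zify.
From Stdlib Require Import Lia.
Import Order.TTheory GRing.Theory Num.Theory.
Import numFieldNormedType.Exports.
Local Open Scope classical_set_scope.
Local Open Scope ring_scope.

(* Both estimates fail on one example: the 2N+1 normalized exponentials
   e^{ikx}/sqrt(2 pi), |k| <= N, with unit weights. Each has a single Fourier
   mode, so |D_N f_j|^2 is the constant (2 pi)^{-3} and the density is the
   constant (2N+1)(2 pi)^{-3}. Its mixed norm therefore grows like N, whereas
   the right-hand side grows like N^{1/p + 1/beta}; the hypotheses on p, q and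
   beta say precisely that 1/p + 1/beta < 1. *)

Lemma limn_big_nat_eventually {T : ptopologicalType} {idx : T} (op : Monoid.law idx)
    (u : nat -> T) (M : nat) :
  hausdorff_space T -> (forall j, (M <= j)%N -> u j = idx) ->
  limn (fun n => \big[op/idx]_(0 <= j < n) u j) = \big[op/idx]_(0 <= j < M) u j.
Proof.
move=> hT u0; apply: lim_near_cst => //; near=> n.
have nM : (M <= n)%N by near: n; exists M.
rewrite (@big_cat_nat _ _ _ M 0 n _ _ (leq0n M) nM) /= [X in op _ X]big1_seq ?Monoid.mulm1 //.
by move=> j /andP[_]; rewrite mem_index_iota => /andP[/u0].
Unshelve. all: by end_near.
Qed.

Lemma Lnorm_cst {R : realType} {d} {T : measurableType d} (mu : {measure set T -> \bar R})
    {p : \bar R} {V w : R} :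
  mu [set: T] = w%:E -> 0 < w -> (0 < p)%E -> 0 <= V ->
  Lnorm mu p (cst V%:E) = (V * w `^ recip p)%:E.
Proof.
move=> muT w0 + V0; case: p => [r r0| _ |//]; last first.
  rewrite unlock muT lte_fin w0 /= powRr0 mulr1.
  apply: ess_sup_inf.ess_sup_ae_cst; first by rewrite muT lte_fin.
  by apply: nearW => x /=; rewrite ger0_norm.
rewrite lte_fin in r0; rewrite unlock /=.
under eq_integral do rewrite /= ger0_norm //.
rewrite integral_cst //= muT -EFinM poweR_EFin powRM ?powR_ge0 ?ltW //.
by rewrite -powRrM mulfV ?gt_eqF // powRr1.
Qed.

Lemma powR_lt_linear_eventually {R : realType} (t C K : R) : t < 1 -> 0 <= C -> 0 < K ->
  exists n0 : nat, forall n : nat, (n0 <= n)%N -> C * n%:R `^ t < K * n%:R.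
Proof.
move=> t1 C0 K0; have e0 : 0 < 1 - t by rewrite subr_gt0.
pose M := (C / K) `^ (1 - t)^-1.
exists (Num.Def.archi_bound M) => n n0n.
have MX : M < n%:R.
  by apply: lt_le_trans (archi_boundP (powR_ge0 _ _)) _; rewrite ler_nat.
move: MX; set X : R := n%:R => MX.
have X0 : 0 < X by apply: le_lt_trans MX; exact: powR_ge0.
have CK : C / K < X `^ (1 - t).
  have -> : C / K = M `^ (1 - t).
    by rewrite -powRrM mulVf ?gt_eqF // powRr1 // divr_ge0 // ltW.
  by rewrite gt0_ltr_powR ?nnegrE ?powR_ge0 ?ltW.
rewrite -[X in _ < _ * X](powRr1 (ltW X0)) -(subrK t 1) powRD ?(gt_eqF X0) ?implybT //.
by rewrite mulrA ltr_pM2r ?powR_gt0 // mulrC -ltr_pdivrMr.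
Qed.

Section torus.
Context {R : realType}.
Notation mu := (@lebesgue_measure R).

Lemma pi2_gt0 : 0 < 2 * pi :> R.
Proof. by rewrite mulr_gt0 // pi_gt0. Qed.

Lemma lebesgue_measure_Tset : mu (@Tset R) = (2 * pi)%:E.
Proof. by rewrite lebesgue_measure_itv /= lte_fin pi2_gt0 sube0. Qed.

Lemma is_derive_continuous {f df : R -> R} :
  (forall x : R, is_derive x 1 f (df x)) -> continuous f.
Proof.
by move=> fdf x; apply/differentiable_continuous/derivable1_diffP; case: (fdf x).
Qed.

Lemma is_derive_scaled (c m : R) {f : R -> R} {x a : R} :
  is_derive (x * m) 1 f a -> is_derive x 1 (fun y => c * f (y * m)) (c * m * a).
Proof.
move=> fa; have dm : is_derive x 1 (fun y : R => y * m) m.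
  by apply: is_derive_eq; rewrite scaler0 add0r [_ *: _]mulr1.
have := is_deriveZ c (@is_derive1_comp _ f (fun y => y * m) x a m fa dm).
by move=> h; apply: (is_derive_eq h); rewrite /GRing.scale /= mulrA mulrAC.
Qed.

Lemma integral_Tset_derive {F f : R -> R} :
  (forall x : R, is_derive x 1 F (f x)) -> continuous f ->
  (\int[mu]_(x in @Tset R) (f x)%:E = (F (2 * pi) - F 0)%:E)%E.
Proof.
move=> dF cf; rewrite integral_itv_bndo_bndc; last first.
  apply/measurable_realfun.measurable_EFinP/measurable_funTS.
  exact: measurable_realfun.continuous_measurable_fun.
rewrite (@continuous_FTC2 _ _ F) //.
- exact: pi2_gt0.
- exact/continuous_subspaceT.
- have cF := is_derive_continuous dF.
  split; first by move=> x _; case: (dF x).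
  + exact/cvg_at_right_filter/cF.
  + exact/cvg_at_left_filter/cF.
- by move=> x _; rewrite derive1E derive_val.
Qed.

Lemma periodic_2pi_int (f : R -> R) (m : int) :
  periodic f (pi *+ 2) -> f (2 * pi * m%:~R) = f 0.
Proof.
have multiple n : pi *+ 2 *+ n = 2 * pi * n%:R :> R by rewrite mulr_natr mulr_natl.
move=> fP; case: m => n.
  by rewrite -(periodicn fP n 0) add0r multiple.
by rewrite -(periodicn fP n.+1) multiple NegzE mulrNz mulrN addNr.
Qed.

Lemma integral_Tset_cst (c : R) :
  (\int[mu]_(x in @Tset R) c%:E = (c * (2 * pi))%:E)%E.
Proof.
rewrite integral_cst; last exact: measurable_Tset.
by rewrite EFinM -lebesgue_measure_Tset.
Qed.

Lemma integral_Tset_cos (c : R) (m : int) :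
  (\int[mu]_(x in @Tset R) (c * cos (x * m%:~R))%:E =
   (if m == 0 then c * (2 * pi) else 0)%:E)%E.
Proof.
have [->|m0] := eqVneq m 0.
  by under eq_integral do rewrite mulr0 cos0 mulr1; exact: integral_Tset_cst.
have dF (x : R) : is_derive x 1 (fun y => c / m%:~R * sin (y * m%:~R)) (c * cos (x * m%:~R)).
  apply: (is_derive_eq (is_derive_scaled (c / m%:~R) m%:~R (is_derive_sin _))).
  by rewrite divfK ?intr_eq0.
rewrite (integral_Tset_derive dF).
  by rewrite periodic_2pi_int ?mul0r ?subrr // => u; rewrite sinD2pi.
exact: (is_derive_continuous (fun x => is_derive_scaled c m%:~R (is_derive_cos (x * m%:~R)))).
Qed.

Lemma integral_Tset_sin (c : R) (m : int) :
  (\int[mu]_(x in @Tset R) (c * sin (x * m%:~R))%:E = 0%:E)%E.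
Proof.
have [->|m0] := eqVneq m 0.
  by under eq_integral do rewrite mulr0 sin0 mulr0; rewrite integral0.
have dF (x : R) : is_derive x 1 (fun y => - c / m%:~R * cos (y * m%:~R)) (c * sin (x * m%:~R)).
  apply: (is_derive_eq (is_derive_scaled (- c / m%:~R) m%:~R (is_derive_cos _))).
  by rewrite divfK ?intr_eq0 // mulrNN.
rewrite (integral_Tset_derive dF).
  by rewrite periodic_2pi_int ?mul0r ?subrr // => u; rewrite cosD2pi.
exact: (is_derive_continuous (fun x => is_derive_scaled c m%:~R (is_derive_sin (x * m%:~R)))).
Qed.

Local Open Scope complex_scope.

Lemma cexpiD (a b : R) : cexpi a * cexpi b = cexpi (a + b).
Proof. by rewrite /cexpi cosD sinD; simpc; congr (_ +i* _); ring. Qed.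

Lemma normc_real (c : R) : ComplexField.Normc.normc c%:C = `|c|.
Proof. by rewrite /= expr0n addr0 sqrtr_sqr. Qed.

Lemma cabs_scaled_cexpi (c a : R) : cabs (c%:C * cexpi a) = `|c|.
Proof.
by rewrite /cabs ComplexField.Normc.normcM normc_real /= cos2Dsin2 sqrtr1 mulr1.
Qed.

Lemma cint_scaled_cexpi (c : R) (m : int) :
  cint (fun x => c%:C * cexpi (x * m%:~R)) = (if m == 0 then c * (2 * pi) else 0)%:C.
Proof.
rewrite /cint /Rintegral /=.
under eq_integral do rewrite !mul0r subr0.
under [X in _ +i* fine X]eq_integral do rewrite !mul0r addr0.
by rewrite integral_Tset_cos integral_Tset_sin.
Qed.

Definition expk (k : int) (x : R) : R[i] :=
  (Num.sqrt (2 * pi)^-1)%:C * cexpi (x * k%:~R).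

Lemma conj_expk (k : int) (x : R) :
  conjc (expk k x) = (Num.sqrt (2 * pi)^-1)%:C * cexpi (- (x * k%:~R)).
Proof. by rewrite /expk /cexpi cosN sinN; simpc. Qed.

Lemma expk_mul_conj (k l : int) (x : R) :
  expk k x * conjc (expk l x) = ((2 * pi)^-1)%:C * cexpi (x * (k - l)%:~R).
Proof.
rewrite conj_expk {1}/expk mulrACA cexpiD -rmorphM /= -expr2.
by rewrite sqr_sqrtr ?invr_ge0 ?ltW ?pi2_gt0 // rmorphB /= mulrBr.
Qed.

Lemma l2_inner_expk (k l : int) : l2_inner (expk k) (expk l) = (k == l)%:R.
Proof.
rewrite /l2_inner (eq_fun (expk_mul_conj k l)) cint_scaled_cexpi subr_eq0.
by case: (k == l); rewrite ?mulVf ?gt_eqF ?pi2_gt0.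
Qed.

Lemma cexpi_mul_expk (k n : int) (x : R) :
  cexpi (- (x * n%:~R)) * expk k x = (Num.sqrt (2 * pi)^-1)%:C * cexpi (x * (k - n)%:~R).
Proof. by rewrite /expk mulrCA cexpiD rmorphB /= mulrBr addrC. Qed.

Lemma fourier_expk (k n : int) :
  fourier (expk k) n = ((k == n)%:R * Num.sqrt (2 * pi)^-1)%:C.
Proof.
rewrite /fourier (eq_fun (cexpi_mul_expk k n)) cint_scaled_cexpi subr_eq0 -rmorphM /=.
case: (k == n); last by rewrite mulr0 mul0r.
by rewrite mulrCA mulVf ?mulr1 ?mul1r ?gt_eqF ?pi2_gt0.
Qed.

Lemma sqr_cabs_DN_expk (N j : nat) (t x : R) : (j <= 2 * N)%N ->
  cabs (DN N (expk (j%:Z - N%:Z)) t x) ^+ 2 = (2 * pi) ^- 3.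
Proof.
move=> jN; have jlt : (j < (2 * N).+1)%N by rewrite ltnS.
rewrite /DN (bigD1 (Ordinal jlt)) //= big1 => [|i /eqP ij]; last first.
  rewrite fourier_expk (inj_eq (addIr _)) eqz_nat.
  have /negbTE-> : j != i by apply/eqP => ji; apply: ij; apply: val_inj; rewrite /= ji.
  by rewrite mul0r rmorph0 mul0r.
rewrite fourier_expk eqxx mul1r addr0 mulrA -rmorphM cabs_scaled_cexpi.
rewrite ger0_norm ?mulr_ge0 ?sqrtr_ge0 ?invr_ge0 ?ltW ?pi2_gt0 //.
by rewrite exprMn sqr_sqrtr ?invr_ge0 ?ltW ?pi2_gt0 // -exprVn -exprSr.
Qed.

Lemma csum_eventually0 (u : nat -> R[i]) (M : nat) :
  (forall j, (M <= j)%N -> u j = 0) -> csum u = \sum_(0 <= j < M) u j.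
Proof.
move=> u0; rewrite /csum /series /=.
rewrite !(limn_big_nat_eventually _ _ M (@Rhausdorff R)) => [|j /u0->//|j /u0->//].
have ReIm_sum (v : nat -> R[i]) : \sum_(0 <= j < M) v j =
    (\sum_(0 <= j < M) complex.Re (v j)) +i* (\sum_(0 <= j < M) complex.Im (v j)).
  rewrite !big_mkord; elim: M {u0} => [|m IH]; first by rewrite !big_ord0.
  by rewrite !big_ord_recr /= IH; case: (v m).
by rewrite ReIm_sum.
Qed.

Lemma cabs_natr (n : nat) : cabs (n%:R : R[i]) = n%:R.
Proof. by rewrite /cabs -(rmorph_nat (real_complex R)) normc_real normr_nat. Qed.

Lemma lpow_sum_indicator (beta : R) (M : nat) : beta != 0 ->
  lpow_sum beta (fun j => ((j < M)%N%:R : R[i])) = M%:R%:E.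
Proof.
move=> beta0; rewrite /lpow_sum (limn_big_nat_eventually _ _ M (@ereal_hausdorff R)); last first.
  by move=> j Mj; rewrite ltnNge Mj cabs_natr powR0.
rewrite big_mkord (eq_bigr (fun=> 1%:E)) => [|j _]; last by rewrite ltn_ord cabs_natr powR1.
by rewrite sumEFin sumr_const card_ord.
Qed.

Lemma L2T_expk (k : int) : L2T (expk k).
Proof.
pose c := Num.sqrt (2 * pi)^-1 : R.
have meas_scaled (f df : R -> R) : (forall y : R, is_derive y 1 f (df y)) ->
    measurable_fun (@Tset R) (fun x => c * f (x * k%:~R)).
  move=> fdf; apply: measurable_funTS; apply: measurable_realfun.continuous_measurable_fun.
  exact: (is_derive_continuous (fun y => is_derive_scaled c k%:~R (fdf (y * k%:~R)))).
split.
- rewrite (_ : (fun x => _) = fun x => c * cos (x * k%:~R)).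
    exact: (meas_scaled _ _ (fun y => @is_derive_cos R y)).
  by apply/funext => x /=; rewrite mul0r subr0.
- rewrite (_ : (fun x => _) = fun x => c * sin (x * k%:~R)).
    exact: (meas_scaled _ _ (fun y => @is_derive_sin R y)).
  by apply/funext => x /=; rewrite mul0r addr0.
- under eq_integral do rewrite cabs_scaled_cexpi.
  by rewrite integral_Tset_cst ltry.
Qed.

Lemma orthonormal_expk (g : nat -> int) : injective g -> orthonormal_system (expk \o g).
Proof.
move=> g_inj; split => [j|j k]; first exact: L2T_expk.
by rewrite l2_inner_expk (inj_eq g_inj).
Qed.

Lemma density_expk (N : nat) (t x : R) :
  density N (fun j => ((j < (2 * N).+1)%N%:R : R[i])) (fun j => expk (j%:Z - N%:Z)) t x =
  ((2 * N).+1%:R * (2 * pi) ^- 3)%:C.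
Proof.
rewrite /density (csum_eventually0 _ (2 * N).+1) => [|j]; last first.
  by move=> Nj; rewrite ltnNge Nj mul0r.
rewrite big_mkord (eq_bigr (fun=> ((2 * pi) ^- 3)%:C)) => [|j _].
  by rewrite sumr_const card_ord -rmorphMn -mulr_natl.
by rewrite (ltn_ord j) mul1r sqr_cabs_DN_expk // -ltnS.
Qed.

Lemma muT_setT : muT R [set: R] = (2 * pi)%:E.
Proof. by rewrite /muT /= /mrestr setTI lebesgue_measure_Tset. Qed.

Lemma mixed_norm_cst (p q : \bar R) (V : R) : (0 < p)%E -> (0 < q)%E -> 0 <= V ->
  mixed_norm p q (fun _ _ => V) = (V * (2 * pi) `^ recip q * (2 * pi) `^ recip p)%:E.
Proof.
move=> p0 q0 V0; rewrite /mixed_norm.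
rewrite (eq_Lnorm _ _ (g := cst (V * (2 * pi) `^ recip q)%:E)) => [|t].
  by rewrite (Lnorm_cst _ muT_setT) ?pi2_gt0 // mulr_ge0 ?powR_ge0.
exact: (Lnorm_cst _ muT_setT pi2_gt0 q0 V0).
Qed.

Lemma mixed_norm_density_expk (p q : \bar R) (N : nat) : (0 < p)%E -> (0 < q)%E ->
  mixed_norm p q (fun t x => cabs (density N (fun j => ((j < (2 * N).+1)%N%:R : R[i]))
                                      (fun j => expk (j%:Z - N%:Z)) t x)) =
  ((2 * N).+1%:R * ((2 * pi) ^- 3 * (2 * pi) `^ recip q * (2 * pi) `^ recip p))%:E.
Proof.
move=> p0 q0; have V0 : 0 <= (2 * N).+1%:R * (2 * pi) ^- 3 :> R.
  by rewrite mulr_ge0 ?invr_ge0 ?exprn_ge0 ?ltW ?pi2_gt0.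
under eq_fun do under eq_fun do rewrite density_expk /cabs normc_real ger0_norm //.
by rewrite mixed_norm_cst // !mulrA.
Qed.

Lemma no_density_estimate {p q : \bar R} {s beta C : R} :
  (0 < p)%E -> (0 < q)%E -> 0 <= s -> 0 < beta -> s + beta^-1 < 1 ->
  ~ (forall N : nat, (1 <= N)%N ->
     forall lam : nat -> R[i], (lpow_sum beta lam < +oo)%E ->
     forall f : nat -> R -> R[i], orthonormal_system f ->
     (mixed_norm p q (fun t x => cabs (density N lam f t x))
        <= (C * N%:R `^ s)%:E * lnorm beta lam)%E).
Proof.
move=> p0 q0 s0 beta0 sbeta estimate.
pose K : R := (2 * pi) ^- 3 * (2 * pi) `^ recip q * (2 * pi) `^ recip p.
have K0 : 0 < K by rewrite !mulr_gt0 ?powR_gt0 ?invr_gt0 ?exprn_gt0 ?pi2_gt0.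
pose C' := Num.max C 0; have C'0 : 0 <= C' by rewrite le_max lexx orbT.
have [n0 growth] := powR_lt_linear_eventually (s + beta^-1) C' K sbeta C'0 K0.
pose N := n0.+1; pose X : R := (2 * N).+1%:R.
have X0 : 0 < X by rewrite ltr0n.
have lamX := lpow_sum_indicator beta (2 * N).+1 (lt0r_neq0 beta0).
have shift_inj : injective (fun j : nat => j%:Z - N%:Z).
  by move=> j k /addIr /eqP; rewrite eqz_nat => /eqP.
(* The system is indexed by all of nat; only its first 2N+1 members carry weight. *)
have ons : orthonormal_system (fun j => expk (j%:Z - N%:Z)) := orthonormal_expk _ shift_inj.
have := estimate N isT (fun j => ((j < (2 * N).+1)%N%:R : R[i])) _ _ ons.
rewrite lamX ltry => /(_ isT).
rewrite mixed_norm_density_expk // /lnorm lamX poweR_EFin -EFinM lee_fin -/X mulrC.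
have rhs : C * N%:R `^ s * X `^ beta^-1 <= C' * X `^ (s + beta^-1).
  have NX : N%:R `^ s <= X `^ s by rewrite ge0_ler_powR ?nnegrE ?ler0n ?ler_nat //; lia.
  rewrite powRD ?(gt_eqF X0) ?implybT // mulrA ler_wpM2r ?powR_ge0 //.
  apply: le_trans (ler_wpM2l C'0 NX).
  by rewrite ler_wpM2r ?powR_ge0 // le_max lexx.
have := growth (2 * N).+1 ltac:(lia).
by rewrite -/X ltNge => /negP + bound; apply; apply: le_trans rhs.
Qed.

End torus.

Theorem theorem1p7 (R : realType) :
  (* (i) *)
  (forall (p : \bar R) (q beta : R),
      (0 < p)%E -> 1 <= q -> 2 * recip p + q^-1 = 1 ->
      2 * q / (q + 1) < beta ->
      ~ (exists C : R,
           forall (N : nat), (1 <= N)%N ->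
           forall lam : nat -> R[i], (lpow_sum beta lam < +oo)%E ->
           forall f : nat -> R -> R[i], orthonormal_system f ->
           (mixed_norm p q%:E (fun t x => cabs (density N lam f t x))
              <= (C * N%:R `^ recip p)%:E * lnorm beta lam)%E)) /\
  (* (ii) *)
  (forall beta : R, 2 < beta ->
      ~ (exists C : R,
           forall (N : nat), (1 <= N)%N ->
           forall lam : nat -> R[i], (lpow_sum beta lam < +oo)%E ->
           forall f : nat -> R -> R[i], orthonormal_system f ->
           (mixed_norm 2%:E +oo (fun t x => cabs (density N lam f t x))
              <= (C * N%:R `^ 2^-1)%:E * lnorm beta lam)%E)).
Proof.
split.
- move=> p q beta p0 q1 pq qbeta [C estimate].
  have q0 : 0 < q by apply: lt_le_trans q1.
  have beta0 : 0 < beta by apply: lt_trans qbeta; rewrite !mulr_gt0 ?invr_gt0 ?addr_gt0.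
  have betai : beta^-1 < (1 + q^-1) / 2.
    have -> : (1 + q^-1) / 2 = (2 * q / (q + 1))^-1.
      by field; rewrite !gt_eqF ?addr_gt0.
    by rewrite ltf_pV2 ?posrE // !mulr_gt0 ?invr_gt0 ?addr_gt0.
  have qi1 : q^-1 <= 1 by rewrite invf_le1.
  apply: (no_density_estimate p0 _ _ beta0 _ estimate).
  + by rewrite lte_fin.
  + lra.
  + lra.
- move=> beta beta2 [C estimate].
  have beta0 : 0 < beta by apply: lt_trans beta2.
  have betai : beta^-1 < 2^-1 by rewrite ltf_pV2 ?posrE.
  apply: (no_density_estimate _ _ _ beta0 _ estimate).
  + by rewrite lte_fin.
  + by rewrite ltry.
  + by rewrite invr_ge0.
  + lra.
Qed.
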